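(* Let $X$ be a Tychonoff space. Then $C(X)=T''(X)$ if and only if $X$ is an almost $P$-space.
   Context: $C(X)$ is the ring of real-valued continuous functions on $X$. A cozero set in $X$ is a set $coz(g)=\{x: g(x)\neq 0\}$ with $g\in C(X)$; its complement $Z(g)$ is a zero set. $T''(X)$ is the set of all functions $f\colon X\to\mathbb{R}$ for which there is a dense cozero set $U$ of $X$ with $f|_U$ continuous. $X$ is an almost $P$-space if every non-empty $G_\delta$-set of $X$ (equivalently, for Tychonoff $X$, every non-empty zero set) has non-empty interior. *)

From HB Require Import structures.
From mathcomp Require Import all_boot all_order all_algebra.
From mathcomp Require Import all_classical all_reals all_analysis.
Set Implicit Arguments. Unset Strict Implicit. Unset Printing Implicit Defensive.
Import Order.TTheory GRing.Theory Num.Theory.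
Import numFieldTopology.Exports numFieldNormedType.Exports.
Local Open Scope classical_set_scope.
Local Open Scope ring_scope.

Definition tychonoff_space (R : realType) (X : topologicalType) : Prop :=
  accessible_space X /\
  (forall (x : X) (B : set X), closed B -> ~ B x ->
     exists f : X -> R, continuous f /\ f x = 0 /\ (forall y, B y -> f y = 1)).

Definition coz (R : realType) (X : topologicalType) (g : X -> R) : set X :=
  [set x | g x != 0].

Definition cozero_set (R : realType) (X : topologicalType) (U : set X) : Prop :=
  exists g : X -> R, continuous g /\ U = coz g.

Definition CX (R : realType) (X : topologicalType) : set (X -> R) :=
  [set f | continuous f].

Definition Tpp (R : realType) (X : topologicalType) : set (X -> R) :=
  [set f | exists U : set X, @cozero_set R X U /\ dense U /\
                             {within U, continuous f}].

Definition G_delta (X : topologicalType) (A : set X) : Prop :=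
  exists F : nat -> set X, (forall n, open (F n)) /\ A = \bigcap_n F n.

Definition almost_P_space (X : topologicalType) : Prop :=
  forall A : set X, G_delta A -> A !=set0 -> interior A !=set0.

From HB Require Import structures.
From mathcomp Require Import all_boot all_order all_algebra.
From mathcomp Require Import all_classical all_reals all_analysis.
From mathcomp Require Import lra.
Import Order.TTheory GRing.Theory Num.Theory.
Import numFieldTopology.Exports numFieldNormedType.Exports.
Local Open Scope classical_set_scope.
Local Open Scope ring_scope.

(* If X is almost P, the zero set of g is a G_delta with empty interior as
   soon as coz g is dense, hence it is empty: a function in T''(X) is then
   continuous on all of X.  Conversely, in a Tychonoff space a nonempty
   G_delta A = \bigcap_n F n containing x contains the zero set of
   g = sup_n min(|f_n|, 1/(n+1)), where f_n vanishes at x and is 1 off F n.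
   If A has empty interior, coz g is dense, and the indicator of coz g lies
   in T''(X) but jumps at x. *)

Section ShrinkingSup.
Local Set Implicit Arguments.
Local Unset Strict Implicit.
Variables (R : realType) (X : topologicalType) (t : nat -> X -> R).
Hypothesis t_cont : forall n, continuous (t n).
Hypothesis t_ge0 : forall n y, 0 <= t n y.
Hypothesis t_le : forall n y, t n y <= n.+1%:R^-1.

Definition supn (y : X) : R := sup (range (t ^~ y)).

Let has_ubound_range y : has_ubound (range (t ^~ y)).
Proof.
exists 1 => _ [n _ <-]; apply: le_trans (t_le n y) _.
by rewrite invf_le1 ?ltr0n // ler1n.
Qed.

Lemma le_supn n y : t n y <= supn y.
Proof. by apply: (ub_le_sup (has_ubound_range y)); exists n. Qed.

Lemma supn_ge0 y : 0 <= supn y.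
Proof. exact: le_trans (t_ge0 0 y) (le_supn 0 y). Qed.

Lemma supn_le y c : (forall n, t n y <= c) -> supn y <= c.
Proof.
move=> tc; apply: ge_sup; first by exists (t 0 y), 0%N.
by move=> _ [n _ <-].
Qed.

Lemma supn_le_shift a b N e : N.+1%:R^-1 <= e ->
  (forall n, (n < N)%N -> t n a <= t n b + e) -> supn a <= supn b + e.
Proof.
move=> Ne tab; apply: supn_le => n; have [/tab ltnN|leNn] := ltnP n N.
  by apply: le_trans ltnN _; rewrite lerD2r le_supn.
have le_inv : n.+1%:R^-1 <= N.+1%:R^-1 :> R.
  by rewrite lef_pV2 ?posrE ?ltr0n // ler_nat ltnS.
apply: le_trans (t_le n a) (le_trans le_inv (le_trans Ne _)).
by rewrite lerDr supn_ge0.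
Qed.

Lemma continuous_supn : continuous supn.
Proof.
move=> y; apply/(@cvgrPdist_lt _ _ X (nbhs y)) => e e0.
have e20 : 0 < e / 2 by rewrite divr_gt0.
have [N _ /(_ N (leqnn N)) Ne] := near_infty_natSinv_lt (PosNum e20).
have near_first : \forall z \near y, forall i : 'I_N, `|t i y - t i z| < e / 2.
  by apply: filter_forall => i; move/cvgrPdist_lt: (@t_cont i y); apply.
apply: filterS near_first => z tyz.
have [tzy ty_z] : (forall n, (n < N)%N -> t n z <= t n y + e / 2) /\
                  (forall n, (n < N)%N -> t n y <= t n z + e / 2).
  split=> n ltnN; have := tyz (Ordinal ltnN); rewrite ltr_distl /=; lra.
have := supn_le_shift (ltW Ne) tzy.
have := supn_le_shift (ltW Ne) ty_z.
rewrite ltr_distl /=; lra.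
Qed.

End ShrinkingSup.

Section CozeroSets.
Local Set Implicit Arguments.
Local Unset Strict Implicit.
Variables (R : realType) (X : topologicalType).
Implicit Types g : X -> R.

Lemma open_coz g : continuous g -> open (coz g).
Proof. by move=> gc; apply: open_comp (@open_neq R 0) => x _; exact: gc. Qed.

Lemma G_delta_zero_set g : continuous g -> G_delta [set x | g x = 0].
Proof.
move=> gc; exists (fun n => g @^-1` ball 0 n.+1%:R^-1); split.
  by move=> n; apply: open_comp (ball_open _ _) => z _; exact: gc.
apply/seteqP; split => z /=.
  by move=> gz n _ /=; rewrite gz; apply: ballxx; rewrite invr_gt0 ltr0n.
move=> gz_small; apply/eqP; apply: contrapT => /negP gz_neq0.
have gz0 : 0 < `|g z| by rewrite normr_gt0.
have [N _ /(_ N (leqnn N)) Ngz] := near_infty_natSinv_lt (PosNum gz0).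
have := gz_small N I; rewrite -ball_normE /ball_ /= sub0r normrN.
by move=> /(lt_trans Ngz); rewrite ltxx.
Qed.

Lemma CX_subset_Tpp : @CX R X `<=` @Tpp R X.
Proof.
move=> f fc; exists setT; split; last first.
  by split; [move=> O O0 _; rewrite setIT | exact: continuous_subspaceT].
exists (fun _ => 1); split; first exact: cst_continuous.
by apply/seteqP; split => y //= _; rewrite /coz /= oner_neq0.
Qed.

Lemma almost_P_dense_coz_setT g : almost_P_space X -> continuous g ->
  dense (coz g) -> coz g = setT.
Proof.
move=> aP gc dense_coz; apply/seteqP; split => // y _; apply/negP => /eqP gy0.
have [w Zw] := aP _ (G_delta_zero_set gc) (ex_intro _ y gy0).
have [v [Zv coz_v]] := dense_coz _ (ex_intro _ w Zw) (@open_interior _ _).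
by move: coz_v; rewrite /coz /= (interior_subset Zv) eqxx.
Qed.

Lemma almost_P_CX_eq_Tpp : almost_P_space X -> @CX R X = @Tpp R X.
Proof.
move=> aP; apply/seteqP; split; first exact: CX_subset_Tpp.
move=> f [_ [[g [gc ->]] [dense_coz fc]]].
rewrite (almost_P_dense_coz_setT aP gc dense_coz) in fc.
by move=> y; have := fc y; rewrite /continuous_at nbhs_subspaceT.
Qed.

Lemma Tpp_indicator_coz g : continuous g -> dense (coz g) ->
  @Tpp R X (fun y => (g y != 0)%:R).
Proof.
move=> gc dense_coz; exists (coz g); split; first by exists g.
split=> //; apply: continuous_in_subspaceT => w; rewrite inE /= => gw.
apply: cvg_near_cst; apply: filterS (open_nbhs_nbhs (conj (open_coz gc) gw)).
by move=> z /= gz; rewrite gz gw.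
Qed.

Lemma indicator_coz_discontinuous g x : g x = 0 -> dense (coz g) ->
  ~ {for x, continuous (fun y => (g y != 0)%:R : R)}.
Proof.
move=> gx dense_coz /(@cvgrPdist_lt _ _ X (nbhs x))/(_ 1 ltr01).
rewrite nbhsE => -[B [oB Bx] near1].
have [w [Bw coz_w]] := dense_coz B (ex_intro _ x Bx) oB.
by have := near1 w Bw; rewrite /= gx eqxx coz_w sub0r normrN normr1 ltxx.
Qed.

Lemma tychonoff_zero_set_sub_G_delta (A : set X) (x : X) :
  @tychonoff_space R X -> G_delta A -> A x ->
  exists g : X -> R, [/\ continuous g, g x = 0 & [set y | g y = 0] `<=` A].
Proof.
move=> [_ separate] [F [Fo ->]] Ax.
have /choice[f fP] : forall n, exists f : X -> R,
    [/\ continuous f, f x = 0 & forall y, ~ F n y -> f y = 1].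
  move=> n; have [||f [fc [fx f1]]] := separate x (~` F n).
  - exact: open_closedC.
  - by apply; exact: Ax.
  - by exists f.
pose t n y := Num.min `|f n y| n.+1%:R^-1.
have t_cont n : continuous (t n).
  apply: min_fun_continuous; last exact: cst_continuous.
  have [fc _ _] := fP n.
  by move=> y; apply: continuous_comp; [exact: fc | exact: norm_continuous].
have t_ge0 n y : 0 <= t n y by rewrite le_min normr_ge0 invr_ge0 ler0n.
have t_le n y : t n y <= n.+1%:R^-1 by rewrite ge_min lexx orbT.
exists (supn t); split.
- exact: continuous_supn.
- apply/le_anti; rewrite supn_ge0 // andbT; apply: supn_le => n.
  by have [_ fx _] := fP n; rewrite /t fx normr0 ge_min lexx.
- move=> y /= gy0 n _; apply: contrapT => Fny; have [_ _ /(_ y Fny) fy] := fP n.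
  have := le_supn t_le n y; rewrite gy0 /t fy normr1 ge_min ler10 /= leNgt.
  by rewrite invr_gt0 ltr0n.
Qed.

Lemma CX_eq_Tpp_almost_P :
  @tychonoff_space R X -> @CX R X = @Tpp R X -> almost_P_space X.
Proof.
move=> tX CT A GA [x Ax]; apply: contrapT => no_interior.
have [g [gc gx ZgA]] := tychonoff_zero_set_sub_G_delta tX GA Ax.
have dense_coz : dense (coz g).
  move=> O [z Oz] oO; apply: contrapT => no_meet; apply: no_interior.
  have O_sub_A : O `<=` A.
    move=> w Ow; apply: ZgA; apply/eqP; apply: contrapT => /negP gw.
    by apply: no_meet; exists w.
  by exists z; move: O_sub_A; rewrite open_subsetE //; apply.
have : @CX R X (fun y => (g y != 0)%:R) by rewrite CT; exact: Tpp_indicator_coz.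
by move/(_ x); exact: indicator_coz_discontinuous.
Qed.

End CozeroSets.

Theorem theorem2p2 (R : realType) (X : topologicalType) :
  @tychonoff_space R X -> (@CX R X = @Tpp R X <-> almost_P_space X).
Proof.
move=> tX; split; first exact: CX_eq_Tpp_almost_P.
exact: almost_P_CX_eq_Tpp.
Qed.
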